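(* In the setting described in the context, let $t_1,\dots,t_k$ be an enumeration of the distinct elements of $T\setminus D$. For $j=0,\dots,k$ let $A_j=D\cup\{t_1,\dots,t_j\}$. Set $c_0=\tfrac12|\Pi_D|$. For $j\ge1$, write $t_j=[e_1,e_2]$ and let $L_1,L_2\in\Pi_{A_{j-1}}$ be the circuits containing $e_1$ and $e_2$. Set $c_j=c_{j-1}-1$ if $L_2\neq (L_1)^*_{A_{j-1}}$ and $L_1,L_2$ are not both shorted with respect to $A_{j-1}$; otherwise set $c_j=c_{j-1}$. Then: (a) for every $j$, $c_j$ equals the number of circuit pairs of $\Pi_{A_j}$ that are not shorted; (b) $\bar x$ is an extreme point of $P^n$ if and only if $c_j=0$ for some $j\in\{0,\dots,k\}$, equivalently if and only if every circuit of $\Pi_{D\cup T}$ is shorted.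
   Context: Let $n\ge4$, $V=\{0,\dots,n-1\}$, and let $E=\{(u,v)\in V\times V:u\ne v\}$ be the set of arcs, written $uv$. Let $\chi_e\in\mathbb R^E$ be unit vectors and $\chi_F=\sum_{e\in F}\chi_e$. Let $\delta^\pm(w)$ be the arcs leaving/entering $w$, let $\delta^+(S)=\{uv:u\in S,v\notin S\}$, let $\mathcal S=\{S\subset V:2\le|S|\le n-2\}$, and let $x(F)=\sum_{e\in F}x_e$. The polytope is $P^n=\{x\in\mathbb R^E: x(\delta^+(w))=x(\delta^-(w))=1\ \forall w,\ x(\delta^+(S))\ge1\ \forall S\in\mathcal S,\ x\ge0\}$. Fix $\bar x\in P^n\cap\{0,\tfrac12\}^E$ and let $E_{\bar x}=\{e:\bar x_e=\tfrac12\}$. For $a\in\{0,1\}^E$ let $\mathrm{pr}(a)=\sum_{e\in E_{\bar x}}a_e\chi_e$. Let $\mathcal S_{\bar x}=\{S\in\mathcal S:\bar x(\delta^+(S))=1\}$. Define the sets $$D=\{\mathrm{pr}(\chi_{\delta^+(u)}),\mathrm{pr}(\chi_{\delta^-(u)}):u\in V\}, \qquad T=\{\mathrm{pr}(\chi_{\delta^+(S)}):S\in\mathcal S_{\bar x}\}.$$ Every vector of $D\cup T$ equals $\chi_{e_1}+\chi_{e_2}$ for two distinct arcs $e_1,e_2\in E_{\bar x}$; it is written $[e_1,e_2]=[e_2,e_1]$. Let $A$ be a set with $D\subseteq A\subseteq D\cup T$. On $E_{\bar x}$ define the relation $e\sim_A e'$ iff there is $\bar e\in E_{\bar x}$ with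 $[e,\bar e]\in A$ and $[\bar e,e']\in A$. Let $\equiv_A$ be its transitive closure; this is an equivalence relation. The equivalence classes are called circuits, and they form the circuit partition $\Pi_A$ of $E_{\bar x}$. For $L\in\Pi_A$, the set $\{\bar e\in E_{\bar x}:\exists e\in L,\ [e,\bar e]\in A\}$ is nonempty and contained in a unique circuit, denoted $L^*_A$ and called the dual of $L$. The pair $\{L,L^*_A\}$ is a circuit pair. $L$ is called shorted if $L^*_A=L$. For $A=D$ no circuit is shorted and circuits come in disjoint dual pairs, so $|\Pi_D|$ is even. *)

From HB Require Import structures.
From mathcomp Require Import all_boot all_order all_algebra.
From mathcomp Require Import reals.
Set Implicit Arguments. Unset Strict Implicit. Unset Printing Implicit Defensive.
Import Order.TTheory GRing.Theory Num.Theory.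
Local Open Scope ring_scope.

Definition darc (n : nat) := {p : 'I_n * 'I_n | p.1 != p.2}.
Definition atail {n} (e : darc n) : 'I_n := (val e).1.
Definition ahead {n} (e : darc n) : 'I_n := (val e).2.

Section Defs.
Variable n : nat.
Variable R : realType.

Definition deltaout (w : 'I_n) : {set darc n} := [set e | atail e == w].
Definition deltain (w : 'I_n) : {set darc n} := [set e | ahead e == w].
Definition deltaS (S : {set 'I_n}) : {set darc n} :=
  [set e | (atail e \in S) && (ahead e \notin S)].
Definition xsum (x : darc n -> R) (F : {set darc n}) : R := \sum_(e in F) x e.

Definition calS : {set {set 'I_n}} := [set S : {set 'I_n} | (2 <= #|S|)%N && (#|S| <= n - 2)%N].

Definition Pn (x : darc n -> R) : Prop :=
  [/\ forall w, xsum x (deltaout w) = 1,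
      forall w, xsum x (deltain w) = 1,
      forall S, S \in calS -> xsum x (deltaS S) >= 1
    & forall e, x e >= 0].

Definition extreme_point (P : (darc n -> R) -> Prop) (x : darc n -> R) : Prop :=
  P x /\ forall (y z : darc n -> R) (l : R), P y -> P z -> 0 < l < 1 ->
    (forall e, x e = l * y e + (1 - l) * z e) -> y = z.

Definition Ehalf (xb : darc n -> R) : {set darc n} := [set e | xb e == 2^-1].

(* 0/1 vectors supported in E_xbar are represented by their supports:
   pr(chi_F) is represented by F :&: E_xbar. *)
Definition Dset (xb : darc n -> R) : {set {set darc n}} :=
  [set deltaout u :&: Ehalf xb | u : 'I_n] :|: [set deltain u :&: Ehalf xb | u : 'I_n].
Definition Sx (xb : darc n -> R) : {set {set 'I_n}} :=
  [set S in calS | xsum xb (deltaS S) == 1].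
Definition Tset (xb : darc n -> R) : {set {set darc n}} :=
  [set deltaS S :&: Ehalf xb | S in Sx xb].

(* circuits w.r.t. a set A of vectors [e1,e2] (represented as [set e1; e2]) *)
Variable Ex : {set darc n}.

Definition simA (A : {set {set darc n}}) : rel (darc n) := fun e e' =>
  [&& e \in Ex, e' \in Ex &
      [exists eb in Ex, ([set e; eb] \in A) && ([set eb; e'] \in A)]].

Definition circuits (A : {set {set darc n}}) : {set {set darc n}} :=
  equivalence_partition (connect (simA A)) Ex.

Definition dualset (A : {set {set darc n}}) (L : {set darc n}) : {set darc n} :=
  [set eb in Ex | [exists e in L, [set e; eb] \in A]].

Definition dual (A : {set {set darc n}}) (L : {set darc n}) : {set darc n} :=
  if [pick eb in dualset A L] is Some eb then pblock (circuits A) eb else set0.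

Definition shorted (A : {set {set darc n}}) (L : {set darc n}) : bool := dual A L == L.

Definition nonshorted_pairs (A : {set {set darc n}}) : {set {set {set darc n}}} :=
  [set [set L; dual A L] | L in [set L in circuits A | ~~ shorted A L]].

Definition Aj (D : {set {set darc n}}) (ts : seq {set darc n}) (j : nat) :=
  D :|: [set t in take j ts].

Definition decr (A : {set {set darc n}}) (t : {set darc n}) : bool :=
  if enum t is [:: e1; e2] then
    let L1 := pblock (circuits A) e1 in
    let L2 := pblock (circuits A) e2 in
    (L2 != dual A L1) && ~~ (shorted A L1 && shorted A L2)
  else false.

(* c_j ; t_j = nth set0 ts (j-1) *)
Fixpoint cval (D : {set {set darc n}}) (ts : seq {set darc n}) (j : nat) : int :=
  match j with
  | 0 => (#|circuits D| %/ 2)%:Z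
  | j'.+1 => cval D ts j' - (decr (Aj D ts j') (nth set0 ts j'))%:Z
  end.

End Defs.

From HB Require Import structures.
From mathcomp Require Import all_boot all_order all_algebra.
From mathcomp Require Import reals ring lra.
From Stdlib Require Import FunctionalExtensionality.
Set Implicit Arguments. Unset Strict Implicit. Unset Printing Implicit Defensive.
Import Order.TTheory GRing.Theory Num.Theory.

(* Read the vectors [e1,e2] of A as the edges of a graph on E_x. Then e and e' lie in
   the same circuit iff some walk of even length joins them, i.e. iff (e, false) and
   (e', false) are connected in the bipartite double cover; the dual of a circuit
   collects the ends of odd walks, a circuit is shorted iff its component carries an
   odd closed walk, and the non-shorted circuit pairs are the colour classes of the
   bipartite components.
   Every arc of E_x shares its tail with exactly one other arc of E_x and its head with
   exactly one other, so the graph of D is a disjoint union of cycles alternating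
   between these two kinds of edges; these cycles are even, whence c_0 counts the
   components. Adding t_j = [e1,e2] destroys one bipartite component exactly in the
   case that decrements c_j.
   Finally, the constraints tight at x restricted to E_x are the edges of D u T. If a
   component has an odd closed walk, any d with d_e + d_f = 0 on all edges vanishes on
   it; on a bipartite component, +-1/6 along a 2-colouring is a direction in which x
   can be moved both ways inside P^n. *)

Lemma connect_preserves (T : finType) (r : rel T) (P : T -> Prop) x y :
  (forall u v, P u -> r u v -> P v) -> connect r x y -> P x -> P y.
Proof.
move=> hP /connectP [p pth ->]; elim: p x pth => [|z p IH] x //=.
by move/andP=> [hxz hp] Px; apply: IH hp (hP _ _ Px hxz).
Qed.

Lemma connect_homo (T U : finType) (r : rel T) (s : rel U) (f : T -> U) x y :
  (forall u v, r u v -> connect s (f u) (f v)) -> connect r x y -> connect s (f x) (f y).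
Proof.
move=> hf hxy; apply: (connect_preserves (P := fun z => connect s (f x) (f z))) hxy _.
  by move=> u v hu /hf; apply: connect_trans.
exact: connect0.
Qed.

Lemma connect_restrict (T : finType) (r r' : rel T) (P : T -> Prop) x y :
  (forall u v, P u -> r' u v -> P v /\ r u v) -> connect r' x y -> P x -> connect r x y.
Proof.
move=> hP hxy Px.
suff [] : P y /\ connect r x y by [].
apply: (connect_preserves (P := fun z => P z /\ connect r x z)) hxy _.
  by move=> u v [Pu hu] /(hP _ _ Pu) [Pv ruv]; split; last exact: connect_trans hu (connect1 ruv).
by split; last exact: connect0.
Qed.

Lemma card_imset_same_kernel (T U1 U2 : finType) (f : T -> U1) (g : T -> U2) (D : {set T}) :
  {in D &, forall x y, (f x == f y) = (g x == g y)} -> #|f @: D| = #|g @: D|.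
Proof.
move=> hfg; case: (set_0Vmem D) => [hD | [x0 x0D]].
  by rewrite hD (imset0 f) (imset0 g) !cards0.
pose pre X := odflt x0 [pick x in D | f x == X].
have preP x : x \in D -> pre (f x) \in D /\ f (pre (f x)) = f x.
  move=> xD; rewrite /pre; case: pickP => [y /andP [yD /eqP ->] | /(_ x)] //=.
  by rewrite xD eqxx.
have -> : g @: D = (g \o pre) @: (f @: D).
  apply/setP => y; apply/imsetP/imsetP => [[x xD ->] | [X /imsetP [x xD ->] ->]].
    have [pD pE] := preP x xD; exists (f x); first exact: imset_f.
    by apply/eqP; rewrite /= -hfg // pE.
  by exists (pre (f x)); have [] := preP x xD.
rewrite [RHS]card_in_imset // => _ _ /imsetP [x xD ->] /imsetP [y yD ->] /= /eqP.
have [px pxe] := preP x xD; have [py pye] := preP y yD.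
by rewrite -hfg // pxe pye => /eqP.
Qed.

Lemma big_set2 (T : finType) (V : nmodType) (F : T -> V) a b :
  a != b -> (\sum_(i in [set a; b]) F i = F a + F b)%R.
Proof. by move=> ab; rewrite big_setU1 ?inE // big_set1. Qed.

Lemma set2_eqb (T : finType) (u v a b : T) : a != b ->
  ([set u; v] == [set a; b]) = ((u == a) && (v == b)) || ((u == b) && (v == a)).
Proof.
move=> ab; apply/eqP/idP => [h | /orP [] /andP [/eqP -> /eqP ->] //]; last by rewrite setUC.
have uv : u != v by move: (cards2 u v); rewrite h cards2 ab; case: (u != v).
have : u \in [set a; b] by rewrite -h !inE eqxx.
have : v \in [set a; b] by rewrite -h !inE eqxx orbT.
rewrite !inE; case/orP => /eqP hv; case/orP => /eqP hu; subst; rewrite ?eqxx ?orbT //.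
all: by rewrite eqxx in uv.
Qed.

(* [x (y x)^k] is conjugate to [x] or to [y], hence has no fixed point in [E]. *)
Lemma alternating_walk_neq (T : finType) (E : {set T}) (x y : T -> T) :
  involutive x -> involutive y -> {in E, forall a, x a \in E} -> {in E, forall a, y a \in E} ->
  {in E, forall a, x a != a} -> {in E, forall a, y a != a} ->
  forall k a, a \in E -> x (iter k (y \o x) a) != a.
Proof.
have iter_swap (u v : T -> T) k c : iter k (v \o u) (v c) = v (iter k (u \o v) c).
  by elim: k => //= k ->.
move=> + + + + + + k; elim: k x y => [|k IH] x y ix iy xE yE xn yn a aE; first exact: xn.
rewrite iterSr /= iter_swap; apply/eqP => h.
have h2 : y (iter k (x \o y) (x a)) = x a by rewrite -[in RHS]h ix.
by have := IH y x iy ix yE xE yn xn (x a) (xE a aE); rewrite h2 eqxx.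
Qed.

Definition other (T : finType) (S : {set T}) (a : T) : T := odflt a [pick b in S :\ a].

Lemma other_pair (T : finType) (S : {set T}) a : #|S| = 2%N -> a \in S ->
  [/\ other S a \in S, other S a != a, other S (other S a) = a & S = [set a; other S a]].
Proof.
have other2 (p q : T) : p != q -> other [set p; q] p = q.
  move=> pq; rewrite /other; case: pickP => [c | /(_ q)] /=.
    by rewrite !inE => /andP [cp /orP [] /eqP //]; move/eqP: cp.
  by rewrite !inE eqxx orbT eq_sym pq.
move/eqP/cards2P => [p [q [pq ->]]].
have hp := other2 _ _ pq; have hq : other [set p; q] q = p by rewrite setUC other2 // eq_sym.
rewrite !inE => /orP [] /eqP ->; rewrite ?hp ?hq; split; rewrite ?inE ?eqxx ?orbT //.
- by rewrite eq_sym.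
- by rewrite setUC.
Qed.

Lemma set2_inj_r (T : finType) (a b c : T) : [set a; b] = [set a; c] -> a != b -> b = c.
Proof.
move=> h ab; have : b \in [set a; c] by rewrite -h !inE eqxx orbT.
by rewrite !inE eq_sym (negbTE ab) => /eqP.
Qed.

(** * Circuits and the bipartite double cover *)

Section DoubleCover.
Variables (n : nat) (Ex : {set darc n}) (A : {set {set darc n}}).
Hypothesis A_pairs : forall t, t \in A ->
  exists a b, [/\ a != b, a \in Ex, b \in Ex & t = [set a; b]].

Definition edge (e f : darc n) : bool := [set e; f] \in A.
Definition linked : rel (darc n) := connect edge.

(* Walks in the bipartite double cover: [pconnect (e, b) (f, c)] holds iff some
   walk from [e] to [f] has length of parity [b (+) c]. *)
Definition cover_edge : rel (darc n * bool) := fun x y => edge x.1 y.1 && (y.2 == ~~ x.2).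
Definition pconnect : rel (darc n * bool) := connect cover_edge.

Definition bipartite e : bool := ~~ pconnect (e, true) (e, false).

Definition even_class e : {set darc n} := [set f in Ex | pconnect (e, false) (f, false)].
Definition odd_class e : {set darc n} := [set f in Ex | pconnect (e, true) (f, false)].
Definition component e : {set darc n} := [set f in Ex | linked e f].
Definition bipartite_vertices : {set darc n} := [set e in Ex | bipartite e].
Definition bipartite_components : {set {set darc n}} := component @: bipartite_vertices.

Lemma edgeC e f : edge e f = edge f e.
Proof. by rewrite /edge setUC. Qed.

Lemma edge_pair e f : edge e f -> [/\ e != f, e \in Ex & f \in Ex].
Proof.
move=> /A_pairs [a [b [ab aE bE h]]].
have := set2_eqb e f ab; rewrite h eqxx => /esym.
by case/orP => /andP [/eqP -> /eqP ->]; rewrite // eq_sym.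
Qed.

Lemma linked_refl e : linked e e.
Proof. exact: connect0. Qed.

Lemma linked_sym : symmetric linked.
Proof. by apply: sym_connect_sym; exact: edgeC. Qed.

Lemma linked_edge_r z e f : edge e f -> linked z e = linked z f.
Proof. by move=> h; apply: (same_connect1r (sym_connect_sym edgeC) h z). Qed.

Lemma cover_edge_sym : symmetric cover_edge.
Proof. by move=> [a b] [c d]; rewrite /cover_edge /= edgeC; case: b; case: d. Qed.

Lemma pconnect_sym x y : pconnect x y = pconnect y x.
Proof. exact: (sym_connect_sym cover_edge_sym). Qed.

Lemma pconnect_trans x y z : pconnect x y -> pconnect y z -> pconnect x z.
Proof. exact: connect_trans. Qed.

Lemma pconnect1 a b c : edge a b -> pconnect (a, c) (b, ~~ c).
Proof. by move=> h; apply: connect1; rewrite /cover_edge /= h eqxx. Qed.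

Lemma pconnect_edge_r z a b c : edge a b -> pconnect z (a, c) = pconnect z (b, ~~ c).
Proof.
move=> h; apply: (same_connect1r (sym_connect_sym cover_edge_sym)).
by rewrite /cover_edge /= h eqxx.
Qed.

Lemma pconnect_flip a b c d : pconnect (a, ~~ b) (c, ~~ d) = pconnect (a, b) (c, d).
Proof.
pose fl (x : darc n * bool) := (x.1, ~~ x.2).
have fl_homo x y : pconnect x y -> pconnect (fl x) (fl y).
  apply: connect_homo => -[u p] [v q] /andP [/= huv /eqP /= ->].
  exact: pconnect1.
apply/idP/idP => [/fl_homo | /(fl_homo (a, b) (c, d))] //.
by rewrite /fl /= !negbK.
Qed.

Lemma pconnect_linked x y : pconnect x y -> linked x.1 y.1.
Proof. by apply: (connect_homo (f := fst)) => u v /andP [h _]; apply: connect1. Qed.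

Lemma linked_pconnect e f : linked e f -> exists b, pconnect (e, false) (f, b).
Proof.
move=> h; apply: (connect_preserves (P := fun g => exists b, pconnect (e, false) (g, b))) h _.
  by move=> u v [b hb] huv; exists (~~ b); apply: pconnect_trans hb (pconnect1 _ huv).
by exists false; apply: connect0.
Qed.

Lemma linkedE e f : linked e f = pconnect (e, false) (f, false) || pconnect (e, true) (f, false).
Proof.
apply/idP/orP => [/linked_pconnect [[] hb] | [] /pconnect_linked //].
  by right; rewrite -pconnect_flip.
by left.
Qed.

Lemma simA_pconnect e f : connect (simA Ex A) e f = pconnect (e, false) (f, false).
Proof.
apply/idP/idP.
  apply: (connect_homo (f := fun g => (g, false))) => u v.
  move=> /and3P [_ _ /existsP [eb /and3P [_ h1 h2]]].
  exact: pconnect_trans (pconnect1 false h1) (pconnect1 true h2).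
move=> h.
suff : connect (simA Ex A) e f by [].
apply: (connect_preserves (P := fun y => if y.2 then exists2 g, connect (simA Ex A) e g & edge g y.1
                                        else connect (simA Ex A) e y.1)) h (connect0 _ _).
move=> [a []] [c d] /= Pab /andP [/= hac /eqP /= ->] /=; last by exists a.
have [g hg hga] := Pab; apply: connect_trans hg (connect1 _).
have [_ gE aE] := edge_pair hga; have [_ _ cE] := edge_pair hac.
by rewrite /simA gE cE /=; apply/existsP; exists a; rewrite aE /=; apply/andP.
Qed.

Lemma circuitsE : circuits Ex A = even_class @: Ex.
Proof.
apply: eq_imset => e.
by apply/setP => f; rewrite !inE simA_pconnect.
Qed.

Lemma circuits_trivIset : trivIset (circuits Ex A).
Proof.
have equiv : {in Ex & &, equivalence_rel (connect (simA Ex A))}.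
  move=> x y z _ _ _; split; first exact: connect0.
  move=> hxy; rewrite !simA_pconnect in hxy *.
  exact: (same_connect (sym_connect_sym cover_edge_sym) hxy).
by have /and3P [] := equivalence_partitionP equiv.
Qed.

Lemma even_class_self e : e \in Ex -> e \in even_class e.
Proof. by move=> eE; rewrite inE eE; apply: connect0. Qed.

Lemma pblock_circuits e : e \in Ex -> pblock (circuits Ex A) e = even_class e.
Proof.
move=> eE; apply: def_pblock; first exact: circuits_trivIset.
  by rewrite circuitsE; apply: imset_f.
exact: even_class_self.
Qed.

Lemma parity_class_eq x y : pconnect x y ->
  [set f in Ex | pconnect x (f, false)] = [set f in Ex | pconnect y (f, false)].
Proof.
move=> h; apply/setP => g; rewrite !inE; case: (g \in Ex) => //=.
exact: (same_connect (sym_connect_sym cover_edge_sym)).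
Qed.

Lemma even_class_eq e f : pconnect (e, false) (f, false) -> even_class e = even_class f.
Proof. exact: parity_class_eq. Qed.

Lemma odd_class_eq e f : pconnect (e, true) (f, false) -> odd_class e = even_class f.
Proof. exact: parity_class_eq. Qed.

Lemma odd_class_eq_odd e f : pconnect (e, false) (f, false) -> odd_class e = odd_class f.
Proof. by rewrite -pconnect_flip; apply: parity_class_eq. Qed.

Lemma odd_class_edge e f : edge e f -> odd_class e = even_class f.
Proof. by move=> h; apply: odd_class_eq; apply: (pconnect1 true h). Qed.

Lemma even_classP e f : f \in Ex ->
  (even_class f == even_class e) = pconnect (e, false) (f, false).
Proof.
move=> fE; apply/eqP/idP => [h | h]; last by rewrite (even_class_eq h).
by have := even_class_self fE; rewrite h inE => /andP [].
Qed.

Lemma even_odd_classP e f : f \in Ex ->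
  (even_class f == odd_class e) = pconnect (e, true) (f, false).
Proof.
move=> fE; apply/eqP/idP => [h | h]; last by rewrite (odd_class_eq h).
by have := even_class_self fE; rewrite h inE => /andP [].
Qed.

Hypothesis Ex_covered : forall e, e \in Ex -> exists f, edge e f.

Lemma dual_even_class e : e \in Ex -> dual Ex A (even_class e) = odd_class e.
Proof.
move=> eE; rewrite /dual; case: pickP => [eb | none].
  rewrite /dualset inE => /andP [ebE /existsP [e' /andP [e'C he']]].
  rewrite pblock_circuits //; symmetry; apply: odd_class_eq.
  move: e'C; rewrite inE => /andP [_ h1].
  by rewrite -pconnect_flip; apply: pconnect_trans h1 (pconnect1 false he').
have [f hf] := Ex_covered eE; have [_ _ fE] := edge_pair hf.
have := none f; rewrite /dualset inE fE /=.
by move/existsP => []; exists e; rewrite even_class_self.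
Qed.

Lemma shorted_even_class e : e \in Ex -> shorted Ex A (even_class e) = ~~ bipartite e.
Proof. by move=> eE; rewrite /shorted dual_even_class // eq_sym even_odd_classP // negbK. Qed.

Lemma component_eq e f : linked e f -> component e = component f.
Proof.
move=> h; apply/setP => g; rewrite !inE; case: (g \in Ex) => //=.
exact: (same_connect (sym_connect_sym edgeC)).
Qed.

Lemma componentP e f : f \in Ex -> (component e == component f) = linked e f.
Proof.
move=> fE; apply/eqP/idP => [h | /component_eq //].
have : f \in component f by rewrite inE fE; apply: connect0.
by rewrite -h inE => /andP [].
Qed.

Lemma bipartite_linked e f : linked e f -> bipartite e = bipartite f.
Proof.
suff impl u v : linked u v -> bipartite v -> bipartite u.
  by move=> h; apply/idP/idP; apply: impl; rewrite // linked_sym.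
move=> /linked_pconnect [b hb]; rewrite /bipartite; apply: contra => huu.
have hvv : pconnect (v, b) (v, ~~ b).
  have hb' : pconnect (u, true) (v, ~~ b).
    by rewrite -[(u, true)]/(u, ~~ false) pconnect_flip.
  rewrite pconnect_sym in hb; rewrite pconnect_sym in huu.
  exact: pconnect_trans hb (pconnect_trans huu hb').
by case: b {hb} hvv => //; rewrite pconnect_sym.
Qed.

Lemma pair_classesP e L : e \in Ex -> L \in [set even_class e; odd_class e] ->
  exists g, [/\ g \in Ex, linked e g & L = even_class g].
Proof.
move=> eE; rewrite !inE => /orP [] /eqP ->; first by exists e; split => //; apply: connect0.
have [f hf] := Ex_covered eE; have [_ _ fE] := edge_pair hf.
by exists f; split; [| apply: connect1 | apply: odd_class_edge].
Qed.

Lemma pair_classes_eqP e f : e \in Ex -> f \in Ex ->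
  ([set even_class e; odd_class e] == [set even_class f; odd_class f]) = linked e f.
Proof.
move=> eE fE; apply/eqP/idP => [h | ].
  have : even_class f \in [set even_class e; odd_class e] by rewrite h !inE eqxx.
  rewrite !inE even_classP // even_odd_classP // => hf.
  by rewrite linkedE.
rewrite linkedE => /orP [] h; first by rewrite (even_class_eq h) (odd_class_eq_odd h).
rewrite (odd_class_eq h) setUC; congr [set _; _].
by rewrite pconnect_sym -pconnect_flip in h; rewrite (odd_class_eq h).
Qed.

Lemma nonshorted_pairsE :
  nonshorted_pairs Ex A = [set [set even_class e; odd_class e] | e in bipartite_vertices].
Proof.
rewrite /nonshorted_pairs circuitsE; apply/setP => X; apply/imsetP/imsetP.
  move=> [L]; rewrite inE => /andP [/imsetP [e eE ->] hs ->].
  by exists e; rewrite ?dual_even_class // inE eE -[bipartite e]negbK -shorted_even_class.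
move=> [e]; rewrite inE => /andP [eE be] ->; exists (even_class e).
  by rewrite inE imset_f //= shorted_even_class // be.
by rewrite dual_even_class.
Qed.

Lemma card_nonshorted_pairs : #|nonshorted_pairs Ex A| = #|bipartite_components|.
Proof.
rewrite nonshorted_pairsE; apply: card_imset_same_kernel => e f.
by rewrite !inE => /andP [eE _] /andP [fE _]; rewrite pair_classes_eqP // componentP.
Qed.

Lemma card_circuits_all_bipartite : {in Ex, forall e, bipartite e} ->
  #|circuits Ex A| = (#|nonshorted_pairs Ex A| * 2)%N.
Proof.
move=> hb; rewrite nonshorted_pairsE; apply: card_uniform_partition.
  move=> P /imsetP [e]; rewrite inE => /andP [eE _] ->.
  by rewrite cards2 even_odd_classP // -/(bipartite e) hb.
apply/and3P; split.
- rewrite circuitsE eqEsubset; apply/andP; split.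
    apply/bigcupsP => P /imsetP [e]; rewrite inE => /andP [eE _] ->.
    by apply/subsetP => L /(pair_classesP eE) [g [gE _ ->]]; apply: imset_f.
  apply/subsetP => L /imsetP [e eE ->]; apply/bigcupP; exists [set even_class e; odd_class e].
    by apply: imset_f; rewrite inE eE hb.
  by rewrite !inE eqxx.
- apply/trivIsetP => P Q /imsetP [e eU ->] /imsetP [f fU ->]; apply: contraR.
  move: eU fU; rewrite !inE => /andP [eE _] /andP [fE _].
  case/pred0Pn => L /andP [/(pair_classesP eE) [g [gE heg ->]] /(pair_classesP fE) [h [hE hfh]]].
  move/eqP; rewrite even_classP // => /pconnect_linked /= hhg.
  rewrite pair_classes_eqP //; apply: connect_trans heg _.
  by rewrite linked_sym in hhg; rewrite linked_sym in hfh; apply: connect_trans hhg hfh.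
- apply/imsetP => [[e _ /esym/setP/(_ (even_class e))]].
  by rewrite !inE eqxx.
Qed.

Definition coloring e (col : darc n -> bool) : Prop :=
  forall u v, linked e u -> edge u v -> col v = ~~ col u.

Lemma coloring_parity e col u v b c : coloring e col -> linked e u ->
  pconnect (u, b) (v, c) -> col v (+) c = col u (+) b.
Proof.
move=> hcol heu huv.
suff [] : linked e v /\ col v (+) c = col u (+) b by [].
pose P y := linked e y.1 /\ col y.1 (+) y.2 = col u (+) b.
apply: (connect_preserves (P := P)) huv _ => //.
move=> [x p] [y q] [/= hex hx] /andP [/= hxy /eqP /= ->]; split.
  exact: connect_trans hex (connect1 hxy).
by rewrite (hcol _ _ hex hxy) addNb addbN negbK.
Qed.

Lemma bipartite_odd_not_even e u :
  bipartite e -> pconnect (e, false) (u, true) -> ~~ pconnect (e, false) (u, false).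
Proof.
move=> be hu; apply: contra be => hu'.
have hu2 : pconnect (e, true) (u, false) by rewrite -pconnect_flip.
by apply: pconnect_trans hu2 _; rewrite pconnect_sym.
Qed.

Lemma bipartiteP e : reflect (exists col, coloring e col) (bipartite e).
Proof.
apply: (iffP idP) => [be | [col hcol]].
  exists (fun u => pconnect (e, false) (u, false)) => u v heu huv.
  rewrite -(pconnect_edge_r _ true huv).
  have [[] hb] := linked_pconnect heu.
    by rewrite hb; symmetry; apply: bipartite_odd_not_even.
  by rewrite hb; apply/negbTE; apply: contraL hb; apply: bipartite_odd_not_even.
by apply/negP => /(coloring_parity hcol (connect0 _ e)); case: (col e).
Qed.

Lemma card_components_linked (W : {set darc n}) x : x \in W -> W \subset Ex ->
  {in W, forall e, linked x e} -> #|component @: (bipartite_vertices :&: W)| = bipartite x.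
Proof.
move=> xW WE hW; have xE : x \in Ex := subsetP WE x xW.
case hbx: (bipartite x).
  suff -> : component @: (bipartite_vertices :&: W) = [set component x] by rewrite cards1.
  apply/setP => X; rewrite inE; apply/imsetP/eqP => [[e eUW ->] | ->].
    by move: eUW; rewrite inE => /andP [_ /hW /component_eq].
  by exists x => //; rewrite !inE xE hbx xW.
apply/eqP; rewrite cards_eq0 imset_eq0; apply/eqP/setP => e; rewrite !inE.
apply/negbTE/andP => [[/andP [eE be] /hW/bipartite_linked]].
by rewrite hbx be.
Qed.

Lemma card_components_split (W1 W2 : {set darc n}) :
  {in W1 & W2, forall e f, ~~ linked e f} ->
  #|component @: (bipartite_vertices :&: (W1 :|: W2))| =
  (#|component @: (bipartite_vertices :&: W1)| + #|component @: (bipartite_vertices :&: W2)|)%N.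
Proof.
move=> hW; rewrite setIUr imsetU cardsU.
suff -> : component @: (bipartite_vertices :&: W1) :&:
          component @: (bipartite_vertices :&: W2) = set0.
  by rewrite cards0 subn0.
apply/setP => X; rewrite !inE; apply/negbTE/andP => [[/imsetP [e eW ->] /imsetP [f fW /eqP]]].
move: eW fW; rewrite !inE => /andP [/andP [eE _] eW1] /andP [/andP [fE _] fW2].
by rewrite componentP // => hef; have := hW e f eW1 fW2; rewrite hef.
Qed.

Lemma all_shortedE :
  (forall L, L \in circuits Ex A -> shorted Ex A L) <-> {in Ex, forall e, ~~ bipartite e}.
Proof.
rewrite circuitsE; split => [h e eE | h _ /imsetP [e eE ->]].
  by rewrite -shorted_even_class // h // imset_f.
by rewrite shorted_even_class // h.
Qed.

Lemma nonshorted_pairs_eq0P :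
  reflect {in Ex, forall e, ~~ bipartite e} (#|nonshorted_pairs Ex A| == 0%N).
Proof.
rewrite card_nonshorted_pairs cards_eq0 imset_eq0.
apply: (iffP eqP) => [h e eE | h].
  apply/negP => be; have : e \in bipartite_vertices by rewrite inE eE be.
  by rewrite h inE.
by apply/setP => e; rewrite !inE; apply/negbTE/andP => [[eE be]]; move: (h e eE); rewrite be.
Qed.

Lemma decrE (t : {set darc n}) e1 e2 : enum t = [:: e1; e2] -> e1 \in Ex -> e2 \in Ex ->
  decr Ex A t = ~~ pconnect (e1, true) (e2, false) && (bipartite e1 || bipartite e2).
Proof.
move=> Et e1E e2E; rewrite /decr Et !pblock_circuits // dual_even_class //.
by rewrite even_odd_classP // !shorted_even_class // negb_and !negbK.
Qed.

End DoubleCover.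

(** * Adding one edge *)

Section AddEdge.
Variables (n : nat) (Ex : {set darc n}) (A : {set {set darc n}}).
Hypothesis A_pairs : forall t, t \in A ->
  exists a b, [/\ a != b, a \in Ex, b \in Ex & t = [set a; b]].
Variables e1 e2 : darc n.
Hypotheses (e12 : e1 != e2) (e1E : e1 \in Ex) (e2E : e2 \in Ex).

Let A' := [set e1; e2] |: A.

Lemma edge_add u v :
  edge A' u v = [|| edge A u v, (u == e1) && (v == e2) | (u == e2) && (v == e1)].
Proof. by rewrite /edge in_setU1 set2_eqb // orbC. Qed.

Lemma edge_add_new : edge A' e1 e2.
Proof. by rewrite edge_add !eqxx orbT. Qed.

Lemma linked_add u v : linked A u v -> linked A' u v.
Proof. by apply: connect_sub => x y h; apply: connect1; rewrite edge_add h. Qed.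

Lemma pconnect_add x y : pconnect A x y -> pconnect A' x y.
Proof.
apply: connect_sub => u v /andP [h1 h2]; apply: connect1.
by rewrite /cover_edge edge_add h1 h2.
Qed.

Lemma bipartite_add e : bipartite A' e -> bipartite A e.
Proof. by apply: contra => /pconnect_add. Qed.

Lemma linked_addE u : linked A' e1 u = linked A e1 u || linked A e2 u.
Proof.
apply/idP/idP => [h | /orP [] /linked_add h].
- apply: (connect_preserves (P := fun v => linked A e1 v || linked A e2 v)) h _.
    move=> x y hx; rewrite edge_add => /or3P [hxy | /andP [_ /eqP ->] | /andP [_ /eqP ->]].
    + by case/orP: hx => hx; apply/orP; [left | right]; apply: connect_trans hx (connect1 hxy).
    + by rewrite linked_refl orbT.
    + by rewrite linked_refl.
  by rewrite linked_refl.
- exact: h.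
- exact: connect_trans (connect1 edge_add_new) h.
Qed.

Section Untouched.
Variable e : darc n.
Hypotheses (ne1 : ~~ linked A e e1) (ne2 : ~~ linked A e e2).

Lemma edge_add_untouched u v : linked A e u -> edge A' u v -> edge A u v.
Proof.
move=> hu; rewrite edge_add => /or3P [//| /andP [/eqP hu1 _] | /andP [/eqP hu1 _]].
  by move: ne1; rewrite -hu1 hu.
by move: ne2; rewrite -hu1 hu.
Qed.

Lemma pconnect_add_untouched b x : pconnect A' (e, b) x -> pconnect A (e, b) x.
Proof.
move=> h; apply: (connect_restrict (P := fun y => linked A e y.1)) h (connect0 _ _).
move=> u v hu /andP [/(edge_add_untouched hu) huv h2].
by split; [apply: connect_trans hu (connect1 huv) | rewrite /cover_edge huv h2].
Qed.

Lemma linked_add_untouched f : linked A' e f -> linked A e f.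
Proof.
move=> h; apply: (connect_restrict (P := linked A e)) h (connect0 _ _).
move=> u v hu /(edge_add_untouched hu) huv.
by split; first exact: connect_trans hu (connect1 huv).
Qed.

Lemma component_add_untouched : component Ex A' e = component Ex A e.
Proof.
apply/setP => f; rewrite !inE; case: (f \in Ex) => //=.
by apply/idP/idP => [/linked_add_untouched | /linked_add].
Qed.

Lemma bipartite_add_untouched : bipartite A' e = bipartite A e.
Proof.
apply/idP/idP => [/bipartite_add //|]; apply: contra.
exact: pconnect_add_untouched.
Qed.
End Untouched.

Lemma bipartite_add_linked : linked A e1 e2 ->
  bipartite A' e1 = bipartite A e1 && pconnect A (e1, true) (e2, false).
Proof.
move=> h12; apply/idP/andP => [b' | [/bipartiteP [col hcol] h]].
  split; first exact: bipartite_add.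
  have [[] hb] := linked_pconnect h12; first by rewrite -pconnect_flip.
  case/negP: b'; apply: pconnect_trans (pconnect1 true edge_add_new) _.
  by rewrite pconnect_sym; apply: pconnect_add.
have c12 : col e2 = ~~ col e1.
  by have := coloring_parity hcol (connect0 _ e1) h; rewrite addbF addbT.
apply/bipartiteP; exists col => u v.
rewrite linked_addE edge_add => hu /or3P [huv | /andP [/eqP -> /eqP ->] | /andP [/eqP -> /eqP ->]].
- by apply: hcol huv; case/orP: hu => // hu; apply: connect_trans h12 hu.
- exact: c12.
- by rewrite c12 negbK.
Qed.

Lemma bipartite_add_unlinked : ~~ linked A e1 e2 ->
  bipartite A' e1 = bipartite A e1 && bipartite A e2.
Proof.
move=> n12; apply/idP/andP => [b' | [/bipartiteP [col1 hcol1] /bipartiteP [col2 hcol2]]].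
  split; first exact: bipartite_add.
  by apply: bipartite_add; rewrite -(bipartite_linked (connect1 edge_add_new)).
(* Keep col1 on the component of e1 and recolour that of e2 to make e1, e2 differ. *)
pose col u := if linked A e1 u then col1 u else col2 u (+) (col2 e2 (+) ~~ col1 e1).
have c1 : col e1 = col1 e1 by rewrite /col linked_refl.
have c2 : col e2 = ~~ col e1 by rewrite c1 /col (negbTE n12) addKb.
apply/bipartiteP; exists col => u v.
rewrite linked_addE edge_add => hu /or3P [huv | /andP [/eqP -> /eqP ->] | /andP [/eqP -> /eqP ->]].
- rewrite /col; case: (boolP (linked A e1 u)) => h1u.
    have h1v : linked A e1 v := connect_trans h1u (connect1 huv).
    by rewrite h1v (hcol1 _ _ h1u huv).
  have -> : linked A e1 v = false.
    by apply: contraNF h1u => h1v; apply: connect_trans h1v (connect1 _); rewrite edgeC.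
  by rewrite (negbTE h1u) /= in hu; rewrite (hcol2 _ _ hu huv) addNb.
- exact: c2.
- by rewrite c2 negbK.
Qed.

Let far := [set e in Ex | ~~ linked A e e1 && ~~ linked A e e2].
Let near := [set e in Ex | linked A e e1 || linked A e e2].

Lemma card_bipartite_components_split A0 : {in far & near, forall e f, ~~ linked A0 e f} ->
  #|bipartite_components Ex A0| =
  (#|component Ex A0 @: (bipartite_vertices Ex A0 :&: far)| +
   #|component Ex A0 @: (bipartite_vertices Ex A0 :&: near)|)%N.
Proof.
move=> hfn; rewrite -card_components_split //.
suff -> : bipartite_vertices Ex A0 :&: (far :|: near) = bipartite_vertices Ex A0 by [].
apply/setP => e; rewrite !inE.
by case: (e \in Ex); case: (bipartite A0 e); case: (linked A e e1); case: (linked A e e2).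
Qed.

Lemma far_near_unlinked : {in far & near, forall e f, ~~ linked A e f}.
Proof.
move=> e f; rewrite !inE => /andP [_ /andP [ne1 ne2]] /andP [_ hf]; apply/negP => hef.
by case/orP: hf => hf; [case/negP: ne1 | case/negP: ne2]; apply: connect_trans hef hf.
Qed.

Lemma far_near_unlinked_add : {in far & near, forall e f, ~~ linked A' e f}.
Proof.
move=> e f eF fN; have := far_near_unlinked eF fN; apply: contra.
by move: eF; rewrite inE => /andP [_ /andP [ne1 ne2]]; apply: linked_add_untouched.
Qed.

Lemma far_components_add :
  component Ex A' @: (bipartite_vertices Ex A' :&: far) =
  component Ex A @: (bipartite_vertices Ex A :&: far).
Proof.
have -> : bipartite_vertices Ex A' :&: far = bipartite_vertices Ex A :&: far.
  apply/setP => e; rewrite !inE; case: (e \in Ex) => //=.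
  by case: (boolP (~~ _ && ~~ _)) => [/andP [ne1 ne2] | _]; rewrite ?andbF ?bipartite_add_untouched.
apply: eq_in_imset => e; rewrite !inE => /and3P [_ _ /andP [ne1 ne2]].
exact: component_add_untouched.
Qed.

Lemma near_sub : near \subset Ex.
Proof. by apply/subsetP => e; rewrite inE => /andP []. Qed.

Lemma e1_near : e1 \in near.
Proof. by rewrite inE e1E linked_refl. Qed.

Lemma near_components_add :
  #|component Ex A' @: (bipartite_vertices Ex A' :&: near)| = bipartite A' e1.
Proof.
apply: card_components_linked e1_near near_sub _ => e.
by rewrite inE linked_addE !(linked_sym A e) => /andP [].
Qed.

Lemma near_components_linked : linked A e1 e2 ->
  #|component Ex A @: (bipartite_vertices Ex A :&: near)| = bipartite A e1.
Proof.
move=> h12; apply: card_components_linked e1_near near_sub _ => e.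
rewrite inE !(linked_sym A e) => /andP [_ /orP [] // h2e].
exact: connect_trans h12 h2e.
Qed.

Lemma near_components_unlinked : ~~ linked A e1 e2 ->
  #|component Ex A @: (bipartite_vertices Ex A :&: near)| = (bipartite A e1 + bipartite A e2)%N.
Proof.
move=> n12.
have -> : near = [set e in Ex | linked A e e1] :|: [set e in Ex | linked A e e2].
  by apply/setP => e; rewrite !inE andb_orr.
have sub_Ex e0 : [set e in Ex | linked A e e0] \subset Ex.
  by apply/subsetP => e; rewrite inE => /andP [].
have self e0 : e0 \in Ex -> e0 \in [set e in Ex | linked A e e0] by rewrite inE linked_refl andbT.
rewrite card_components_split.
  rewrite (card_components_linked (self _ e1E)) ?(card_components_linked (self _ e2E)) //.
    by move=> e; rewrite inE linked_sym => /andP [].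
  by move=> e; rewrite inE linked_sym => /andP [].
move=> e f; rewrite !inE => /andP [_ he] /andP [_ hf]; apply: contra n12 => hef.
by rewrite linked_sym in he; apply: connect_trans (connect_trans he hef) hf.
Qed.

Lemma card_bipartite_components_add :
  #|bipartite_components Ex A| = (#|bipartite_components Ex A'| +
    (~~ pconnect A (e1, true) (e2, false) && (bipartite A e1 || bipartite A e2)))%N.
Proof.
rewrite (card_bipartite_components_split far_near_unlinked).
rewrite (card_bipartite_components_split far_near_unlinked_add).
rewrite far_components_add near_components_add -addnA; congr (_ + _)%N.
case: (boolP (linked A e1 e2)) => h12.
  rewrite near_components_linked // bipartite_add_linked // -(bipartite_linked h12) orbb.
  by case: (bipartite A e1); case: (pconnect A _ _).
rewrite near_components_unlinked // bipartite_add_unlinked //.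
have -> : pconnect A (e1, true) (e2, false) = false.
  by apply: contraNF h12 => /pconnect_linked.
by case: (bipartite A e1); case: (bipartite A e2).
Qed.

Lemma pairs_add t : t \in A' -> exists a b, [/\ a != b, a \in Ex, b \in Ex & t = [set a; b]].
Proof. by rewrite in_setU1 => /orP [/eqP -> | /A_pairs //]; exists e1, e2. Qed.

Hypothesis Ex_covered : forall e, e \in Ex -> exists f, edge A e f.

Lemma card_nonshorted_pairs_add (t : {set darc n}) : enum t = [:: e1; e2] ->
  #|nonshorted_pairs Ex A| = (#|nonshorted_pairs Ex A'| + decr Ex A t)%N.
Proof.
have covered_add e : e \in Ex -> exists f, edge A' e f.
  by move=> /Ex_covered [f hf]; exists f; rewrite edge_add hf.
move=> Et; rewrite (decrE A_pairs Ex_covered Et e1E e2E).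
(* The occurrence patterns are needed: matching [nonshorted_pairs Ex A] against
   [nonshorted_pairs Ex A'] makes the unifier unfold both finset expressions. *)
rewrite [LHS](card_nonshorted_pairs A_pairs Ex_covered).
rewrite [X in (X + _)%N](card_nonshorted_pairs pairs_add covered_add).
exact: card_bipartite_components_add.
Qed.

End AddEdge.

(** * The support graph of a half-integral point *)

Local Open Scope ring_scope.

Section Support.
Variables (n : nat) (R : realType) (xb : darc n -> R).
Hypotheses (hP : Pn xb) (hhalf : forall e, xb e = 0 \/ xb e = 2^-1).

Local Notation Ex := (Ehalf xb).
Local Notation D := (Dset xb).
Local Notation T := (Tset xb).

Lemma xb_out e : e \notin Ex -> xb e = 0.
Proof. by rewrite inE; case: (hhalf e) => -> //; rewrite eqxx. Qed.

Lemma xb_in e : e \in Ex -> xb e = 2^-1.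
Proof. by rewrite inE => /eqP. Qed.

Lemma sum_support (d : darc n -> R) (F : {set darc n}) : (forall e, e \notin Ex -> d e = 0) ->
  \sum_(e in F) d e = \sum_(e in F :&: Ex) d e.
Proof.
move=> hd; rewrite (big_setID Ex) /= [X in _ + X]big1 ?addr0 // => e.
by rewrite !inE => /andP [h _]; apply: hd; rewrite inE.
Qed.

Lemma xsum_half F : xsum xb F = 2^-1 * (#|F :&: Ex|)%:R.
Proof.
rewrite /xsum (sum_support _ xb_out) (eq_bigr (fun _ => 2^-1)) ?sumr_const ?mulr_natr //.
by move=> e; rewrite inE => /andP [_ /xb_in].
Qed.

Lemma tight_card F : xsum xb F = 1 -> #|F :&: Ex| = 2%N.
Proof.
rewrite xsum_half => h.
have : (#|F :&: Ex|%:R : R) = 2 * (2^-1 * #|F :&: Ex|%:R).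
  by rewrite mulrA mulfV ?mul1r // pnatr_eq0.
by rewrite h mulr1 => /eqP; rewrite eqr_nat => /eqP.
Qed.

Lemma tight_pair F : xsum xb F = 1 ->
  exists a b, [/\ a != b, a \in Ex, b \in Ex & F :&: Ex = [set a; b]].
Proof.
move/tight_card/eqP/cards2P => [a [b [ab h]]]; exists a, b.
have : [set a; b] \subset Ex by rewrite -h subsetIr.
by rewrite subUset !sub1set => /andP [].
Qed.

Lemma DT_pairs t : t \in D :|: T ->
  exists a b, [/\ a != b, a \in Ex, b \in Ex & t = [set a; b]].
Proof.
have [hout hin _ _] := hP.
rewrite !in_setU => /orP [/orP [] | ] /imsetP [x hx ->]; apply: tight_pair => //.
by move: hx; rewrite inE => /andP [_ /eqP].
Qed.

Section Mate.
Variable F : darc n -> {set darc n}.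
Hypotheses (F_self : forall a, a \in F a) (F_const : forall a b, b \in F a -> F b = F a)
  (F_tight : forall a, xsum xb (F a) = 1).

Definition mate a : darc n := if a \in Ex then other (F a :&: Ex) a else a.

Lemma mate_props a : a \in Ex ->
  [/\ mate a \in Ex, mate a != a, mate (mate a) = a & F a :&: Ex = [set a; mate a]].
Proof.
move=> aE; have aS : a \in F a :&: Ex by rewrite in_setI aE F_self.
have [o1 o2 o3 o4] := other_pair (tight_card (F_tight a)) aS.
move: (o1); rewrite inE => /andP [/F_const FE oE].
by rewrite /mate aE oE FE o3.
Qed.

End Mate.

Definition out_mate : darc n -> darc n := mate (fun a => deltaout (atail a)).
Definition in_mate : darc n -> darc n := mate (fun a => deltain (ahead a)).

Lemma out_mate_props a : a \in Ex ->
  [/\ out_mate a \in Ex, out_mate a != a, out_mate (out_mate a) = a &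
      deltaout (atail a) :&: Ex = [set a; out_mate a]].
Proof.
have [hout _ _ _] := hP; apply: mate_props => // [b|b c]; first by rewrite inE.
by rewrite inE => /eqP ->.
Qed.

Lemma in_mate_props a : a \in Ex ->
  [/\ in_mate a \in Ex, in_mate a != a, in_mate (in_mate a) = a &
      deltain (ahead a) :&: Ex = [set a; in_mate a]].
Proof.
have [_ hin _ _] := hP; apply: mate_props => // [b|b c]; first by rewrite inE.
by rewrite inE => /eqP ->.
Qed.

Lemma out_mate_inv : involutive out_mate.
Proof.
move=> a; case aE: (a \in Ex); first by have [] := out_mate_props aE.
by rewrite /out_mate /mate aE aE.
Qed.

Lemma in_mate_inv : involutive in_mate.
Proof.
move=> a; case aE: (a \in Ex); first by have [] := in_mate_props aE.
by rewrite /in_mate /mate aE aE.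
Qed.

Lemma deltaout_D u : deltaout u :&: Ex \in D.
Proof. by rewrite in_setU; apply/orP; left; apply/imsetP; exists u. Qed.

Lemma deltain_D u : deltain u :&: Ex \in D.
Proof. by rewrite in_setU; apply/orP; right; apply/imsetP; exists u. Qed.

Lemma D_covered e : e \in Ex -> exists f, edge D e f.
Proof.
move=> eE; exists (out_mate e); rewrite /edge; have [_ _ _ <-] := out_mate_props eE.
exact: deltaout_D.
Qed.

Lemma edge_D_mate a b : edge D a b -> b = out_mate a \/ b = in_mate a.
Proof.
have D_pairs t : t \in D -> exists a b, [/\ a != b, a \in Ex, b \in Ex & t = [set a; b]].
  by move=> tD; apply: DT_pairs; rewrite in_setU tD.
move=> h; have [ab aE _] := edge_pair D_pairs h.
move: h; rewrite /edge in_setU => /orP [] /imsetP [u _ hu].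
  left; apply: set2_inj_r ab; have [_ _ _ <-] := out_mate_props aE.
  have : a \in deltaout u :&: Ex by rewrite -hu !inE eqxx.
  by rewrite !inE => /andP [/eqP -> _].
right; apply: set2_inj_r ab; have [_ _ _ <-] := in_mate_props aE.
have : a \in deltain u :&: Ex by rewrite -hu !inE eqxx.
by rewrite !inE => /andP [/eqP -> _].
Qed.

Lemma bipartite_D e : e \in Ex -> bipartite D e.
Proof.
move=> eE; pose g := in_mate \o out_mate.
have g_inj : injective g.
  by apply: (can_inj (g := out_mate \o in_mate)) => a; rewrite /g /= in_mate_inv out_mate_inv.
(* Along an alternating cycle, even walks from e stay on the g-orbit of e, and odd
   walks end at out-mates of that orbit; an odd walk back to e would thus put a fixed
   point on an alternating word in two fixed-point-free involutions. *)
pose P (x : darc n * bool) := fconnect g e (if x.2 then out_mate x.1 else x.1).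
have P_closed x y : P x -> cover_edge D x y -> P y.
  case: x y => [a b] [c d] Px /andP [/= hac /eqP /= ->].
  case: (edge_D_mate hac) => ->; case: b Px; rewrite /P /= ?out_mate_inv // => Px.
    have -> : in_mate a = g (out_mate a) by rewrite /g /= out_mate_inv.
    exact: connect_trans Px (fconnect1 _ _).
  apply: connect_trans Px _; rewrite (fconnect_sym g_inj).
  have {2}-> : a = g (out_mate (in_mate a)) by rewrite /g /= out_mate_inv in_mate_inv.
  exact: fconnect1.
rewrite /bipartite pconnect_sym; apply/negP => /(connect_preserves P_closed).
move=> /(_ (connect0 _ _)) /iter_findex hk.
suff : out_mate (iter (findex g e (out_mate e)) g e) != e by rewrite hk out_mate_inv eqxx.
apply: (alternating_walk_neq out_mate_inv in_mate_inv) eE => a.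
- by case/out_mate_props.
- by case/in_mate_props.
- by case/out_mate_props.
- by case/in_mate_props.
Qed.

Lemma card_circuits_D : #|circuits Ex D| = (#|nonshorted_pairs Ex D| * 2)%N.
Proof.
apply: card_circuits_all_bipartite D_covered bipartite_D => t tD.
by apply: DT_pairs; rewrite in_setU tD.
Qed.

Lemma covered_superset (A : {set {set darc n}}) :
  D \subset A -> forall e, e \in Ex -> exists f, edge A e f.
Proof. by move=> DA e /D_covered [f hf]; exists f; apply: (subsetP DA). Qed.

Section Steps.
Variable ts : seq {set darc n}.
Hypothesis ts_T : {subset ts <= T}.

Lemma Aj_pairs j t : t \in Aj D ts j ->
  exists a b, [/\ a != b, a \in Ex, b \in Ex & t = [set a; b]].
Proof.
have sub : Aj D ts j \subset D :|: T.
  by apply: setUS; apply/subsetP => s; rewrite inE => /mem_take /ts_T.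
by move=> /(subsetP sub); apply: DT_pairs.
Qed.

Lemma Aj_succ j : (j < size ts)%N -> exists e1 e2,
  [/\ enum (nth set0 ts j) = [:: e1; e2], e1 != e2, e1 \in Ex, e2 \in Ex &
      Aj D ts j.+1 = [set e1; e2] |: Aj D ts j].
Proof.
move=> hj; set t := nth set0 ts j.
have [a [b [ab aE bE ht]]] : exists a b, [/\ a != b, a \in Ex, b \in Ex & t = [set a; b]].
  by apply: DT_pairs; rewrite in_setU ts_T ?orbT // mem_nth.
have : size (enum t) = 2%N by rewrite -cardE ht cards2 ab.
case Et: (enum t) => [|e1 [|e2 [|? ?]]] // _.
have htE : t = [set e1; e2] by apply/setP => x; rewrite -mem_enum Et !inE.
have e12 : e1 != e2 by have := enum_uniq (pred_of_set t); rewrite Et /= inE andbT.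
have tEx : t \subset Ex by rewrite ht subUset !sub1set aE bE.
exists e1, e2; split => //.
- by apply: (subsetP tEx); rewrite htE !inE eqxx.
- by apply: (subsetP tEx); rewrite htE !inE eqxx orbT.
- rewrite -htE /Aj (take_nth set0 hj); apply/setP => x.
  by rewrite !inE mem_rcons in_cons orbCA.
Qed.

Lemma cval_nonshorted_pairs j : (j <= size ts)%N ->
  cval Ex D ts j = (#|nonshorted_pairs Ex (Aj D ts j)|)%:Z.
Proof.
elim: j => [_ | j IH hj].
  have -> : Aj D ts 0 = D by apply/setP => x; rewrite /Aj !inE take0 orbF.
  by rewrite [cval _ _ _ 0]/= card_circuits_D mulnK.
have [e1 [e2 [Et e12 e1E e2E hAj]]] := Aj_succ hj.
have covered := covered_superset (subsetUl D [set t in take j ts]).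
have step := card_nonshorted_pairs_add (@Aj_pairs j) e12 e1E e2E covered Et.
rewrite -hAj in step.
rewrite [cval _ _ _ j.+1]/= IH; last exact: ltnW.
have sub_step (a b : nat) (d : bool) : a = (b + d)%N -> a%:Z - d%:Z = b%:Z.
  by move=> ->; rewrite PoszD addrK.
exact: sub_step step.
Qed.

End Steps.

(** * Extreme points *)

Local Notation AT := (D :|: T).

Lemma AT_tight t : t \in AT ->
  exists2 F, t = F :&: Ex & xsum xb F = 1 /\ forall w : darc n -> R, Pn w -> 1 <= xsum w F.
Proof.
have [hout hin _ _] := hP.
rewrite !in_setU => /orP [/orP [] | ] /imsetP [x hx ->].
- by exists (deltaout x); split => // w [hw _ _ _]; rewrite hw.
- by exists (deltain x); split => // w [_ hw _ _]; rewrite hw.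
- move: hx; rewrite inE => /andP [hS /eqP hS1].
  by exists (deltaS x); split => // w [_ _ hw _]; apply: hw.
Qed.

Lemma slack_cut_card S : S \in calS n -> xsum xb (deltaS S) != 1 -> (3 <= #|deltaS S :&: Ex|)%N.
Proof.
have [_ _ hcut _] := hP; move=> hS; have := hcut S hS.
rewrite xsum_half; set k := #|_ :&: _| => h1 hk.
have k2 : (2 <= k)%N by rewrite -(ler_nat R); lra.
rewrite ltn_neqAle k2 andbT; apply: contra hk => /eqP <-.
by rewrite mulVf // pnatr_eq0.
Qed.

(* [1/6] keeps every value on [Ex] at least [1/3], and a cut that is not tight meets at
   least three arcs of [Ex]. *)
Lemma Pn_perturb (d : darc n -> R) :
  (forall e, e \notin Ex -> d e = 0) -> (forall e, - 6^-1 <= d e <= 6^-1) ->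
  (forall t, t \in AT -> \sum_(e in t) d e = 0) -> Pn (fun e => xb e + d e).
Proof.
move=> hd hb hs; have [hout hin hcut hnn] := hP.
have hsum F : xsum (fun e => xb e + d e) F = xsum xb F + \sum_(e in F :&: Ex) d e.
  by rewrite /xsum big_split /= (sum_support _ hd).
have hsum_tight F : F :&: Ex \in AT -> xsum (fun e => xb e + d e) F = xsum xb F.
  by move=> /hs h; rewrite hsum h addr0.
split.
- by move=> w; rewrite hsum_tight ?hout // in_setU deltaout_D.
- by move=> w; rewrite hsum_tight ?hin // in_setU deltain_D.
- move=> S hS; case: (boolP (xsum xb (deltaS S) == 1)) => [/eqP hS1 | hS1].
    rewrite hsum_tight ?hS1 // in_setU; apply/orP; right.
    by apply/imsetP; exists S; rewrite // inE hS hS1 eqxx.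
  have k3 := slack_cut_card hS hS1.
  have -> : xsum (fun e => xb e + d e) (deltaS S) = \sum_(e in deltaS S :&: Ex) (xb e + d e).
    by apply: sum_support => e eE; rewrite (xb_out eE) hd // add0r.
  apply: le_trans (_ : \sum_(e in deltaS S :&: Ex) (3^-1 : R) <= _).
    rewrite sumr_const -mulr_natr.
    have : (3 : R) <= #|deltaS S :&: Ex|%:R by rewrite ler_nat.
    lra.
  apply: ler_sum => e; rewrite inE => /andP [_ eE].
  by rewrite (xb_in eE); have := hb e; lra.
- move=> e; case: (boolP (e \in Ex)) => eE.
    by rewrite (xb_in eE); have := hb e; lra.
  by rewrite (xb_out eE) hd // addr0.
Qed.

Section Decomposition.
Variables (y z : darc n -> R) (l : R).
Hypotheses (Py : Pn y) (Pz : Pn z) (hl : 0 < l < 1) (hx : forall e, xb e = l * y e + (1 - l) * z e).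

Lemma decomposition_support e : e \notin Ex -> y e = 0 /\ z e = 0.
Proof.
have [_ _ _ hy] := Py; have [_ _ _ hz] := Pz; move: hl => /andP [l0 l1] eE.
have := hx e; rewrite (xb_out eE) => hx0.
have a := mulr_ge0 (ltW l0) (hy e).
have b : 0 <= (1 - l) * z e by apply: mulr_ge0 => //; rewrite subr_ge0 ltW.
split.
- have /eqP : l * y e = 0 by lra.
  by rewrite mulf_eq0 gt_eqF //= => /eqP.
- have /eqP : (1 - l) * z e = 0 by lra.
  by rewrite mulf_eq0 gt_eqF ?subr_gt0 //= => /eqP.
Qed.

Lemma decomposition_tight t : t \in AT -> \sum_(e in t) (y e - z e) = 0.
Proof.
move: hl => /andP [l0 l1] /AT_tight [F -> [hF hw]].
rewrite -sum_support; last by move=> e /decomposition_support [-> ->]; rewrite subrr.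
rewrite sumrB -/(xsum y F) -/(xsum z F).
have hxF : xsum xb F = l * xsum y F + (1 - l) * xsum z F.
  by rewrite /xsum (eq_bigr _ (fun e _ => hx e)) big_split /= -!mulr_sumr.
have := hw _ Py; have := hw _ Pz.
set Y := xsum y F in hxF *; set Z := xsum z F in hxF * => hZ hY.
have a : 0 <= l * (Y - 1) by apply: mulr_ge0; lra.
have b : 0 <= (1 - l) * (Z - 1) by apply: mulr_ge0; lra.
have /eqP : l * (Y - 1) = 0 by lra.
rewrite mulf_eq0 gt_eqF //= subr_eq0 => /eqP ->.
have /eqP : (1 - l) * (Z - 1) = 0 by lra.
rewrite mulf_eq0 gt_eqF ?subr_gt0 //= subr_eq0 => /eqP ->.
by rewrite subrr.
Qed.
End Decomposition.

Lemma extreme_of_all_shorted :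
  {in Ex, forall e, ~~ bipartite AT e} -> extreme_point (@Pn n R) xb.
Proof.
move=> hQ; split => // y z l Py Pz hl hx.
have d_tight := decomposition_tight Py Pz hl hx.
(* y - z changes sign along every edge, so an odd closed walk at e forces it to vanish. *)
pose phi (x : darc n * bool) := if x.2 then z x.1 - y x.1 else y x.1 - z x.1.
have phi_step x x' : cover_edge AT x x' -> phi x = phi x'.
  case: x x' => [a b] [c c'] /andP [/= hac /eqP /= ->].
  have [ac _ _] := edge_pair DT_pairs hac.
  have := d_tight _ hac; rewrite big_set2 // => hdc.
  by case: b; rewrite /phi /=; lra.
apply: functional_extensionality => e.
case: (boolP (e \in Ex)) => eE; last by have [-> ->] := decomposition_support Py Pz hl hx eE.
have := hQ e eE; rewrite negbK => hee.
have : phi (e, true) = phi (e, false).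
  apply: (connect_preserves (P := fun x => phi (e, true) = phi x)) hee _ => //.
  by move=> u v hu /phi_step <-.
rewrite /phi /=; lra.
Qed.

Lemma extreme_not_bipartite :
  extreme_point (@Pn n R) xb -> {in Ex, forall e, ~~ bipartite AT e}.
Proof.
move=> [_ hext] e0 e0E; apply/negP => /bipartiteP [col hcol].
pose d a : R := if (a \in Ex) && linked AT e0 a then (if col a then 6^-1 else - 6^-1) else 0.
have d_out e : e \notin Ex -> d e = 0 by rewrite /d => /negbTE ->.
have d_bound e : - 6^-1 <= d e <= 6^-1.
  by rewrite /d; case: ifP => _; [case: (col e) |]; apply/andP; split; lra.
have d_tight t : t \in AT -> \sum_(e in t) d e = 0.
  move=> tAT; have [a [b [ab aE bE ht]]] := DT_pairs tAT.
  have hab : edge AT a b by rewrite /edge -ht.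
  rewrite ht big_set2 // /d aE bE -(linked_edge_r e0 hab) /=.
  case: (boolP (linked AT e0 a)) => h0a; last by rewrite addr0.
  by rewrite (hcol _ _ h0a hab); case: (col a) => /=; lra.
have P1 := Pn_perturb d_out d_bound d_tight.
have P2 : Pn (fun e => xb e + - d e).
  apply: Pn_perturb => [e /d_out -> | e | t /d_tight]; first by rewrite oppr0.
    by have := d_bound e; lra.
  by rewrite sumrN => ->; rewrite oppr0.
have hl : 0 < (2^-1 : R) < 1 by apply/andP; split; lra.
have hmid e : xb e = 2^-1 * (xb e + d e) + (1 - 2^-1) * (xb e + - d e) by field.
have := congr1 (fun f => f e0) (hext _ _ _ P1 P2 hl hmid).
by rewrite /= /d e0E linked_refl; case: (col e0) => /=; lra.
Qed.

End Support.

Lemma cval_decreasing n (Ex : {set darc n}) D ts j k :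
  (j <= k)%N -> cval Ex D ts k <= cval Ex D ts j.
Proof.
move=> /subnK <-; elim: (k - j)%N => [|m IH]; first by rewrite add0n.
by rewrite addSn /=; apply: le_trans IH; rewrite lerBlDr lerDl.
Qed.

Lemma Aj_size n (D T : {set {set darc n}}) ts :
  (forall t, (t \in ts) = (t \in T :\: D)) -> Aj D ts (size ts) = D :|: T.
Proof.
move=> hts; rewrite /Aj take_size.
have -> : [set t in ts] = T :\: D by apply/setP => x; rewrite inE hts.
by rewrite setDE setUIr setUCr setIT.
Qed.

Theorem mainTheorem9 (R : realType) (n : nat) (hn : (4 <= n)%N)
  (xb : darc n -> R)
  (hP : Pn xb) (hhalf : forall e, xb e = 0 \/ xb e = 2^-1)
  (ts : seq {set darc n}) (huniq : uniq ts)
  (hts : forall t, (t \in ts) = (t \in Tset xb :\: Dset xb)) :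
  let Ex := Ehalf xb in
  let D := Dset xb in
  let T := Tset xb in
  [/\ (forall j, (j <= size ts)%N ->
         cval Ex D ts j = (#|nonshorted_pairs Ex (Aj D ts j)|)%:Z),
      extreme_point (@Pn n R) xb <->
        (exists2 j, (j <= size ts)%N & cval Ex D ts j = 0)
    & extreme_point (@Pn n R) xb <->
        (forall L, L \in circuits Ex (D :|: T) -> shorted Ex (D :|: T) L)].
Proof.
move=> Ex D T.
have ts_T : {subset ts <= T} by move=> t; rewrite hts inE => /andP [].
have pairs := DT_pairs hP hhalf.
have covered := covered_superset hP hhalf (subsetUl D T).
have cval_last : cval Ex D ts (size ts) = #|nonshorted_pairs Ex (D :|: T)|.
  by rewrite (cval_nonshorted_pairs hP hhalf ts_T (leqnn _)) (Aj_size hts).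
have extremeE : extreme_point (@Pn n R) xb <-> {in Ex, forall e, ~~ bipartite (D :|: T) e}.
  by split; [apply: extreme_not_bipartite | apply: extreme_of_all_shorted].
split; first exact: (cval_nonshorted_pairs hP hhalf ts_T).
- apply: iff_trans extremeE _.
  split => [/(nonshorted_pairs_eq0P pairs covered) /eqP h0 | [j hj hc0]].
    by exists (size ts); rewrite // cval_last h0.
  apply/(nonshorted_pairs_eq0P pairs covered).
  by have := cval_decreasing Ex D ts hj; rewrite hc0 cval_last; case: #|_|.
- apply: iff_trans extremeE _; apply: iff_sym.
  exact: (all_shortedE pairs covered).
Qed.
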